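(* In the Bell scenario with $\mathcal{X}=\mathcal{Y}=\mathcal{A}=\mathcal{B}=\{0,1\}$, the conditional distribution $p^H$ defined by $p^H(00|00)=\tfrac{5\sqrt5-11}{2}$, $p^H(01|00)=p^H(10|00)=\tfrac{7-3\sqrt5}{2}$, $p^H(11|00)=\tfrac{\sqrt5-1}{2}$; $p^H(00|01)=\sqrt5-2$, $p^H(01|01)=0$, $p^H(10|01)=\tfrac{7-3\sqrt5}{2}$, $p^H(11|01)=\tfrac{\sqrt5-1}{2}$; $p^H(00|10)=\sqrt5-2$, $p^H(01|10)=\tfrac{7-3\sqrt5}{2}$, $p^H(10|10)=0$, $p^H(11|10)=\tfrac{\sqrt5-1}{2}$; $p^H(00|11)=0$, $p^H(01|11)=p^H(10|11)=\tfrac{3-\sqrt5}{2}$, $p^H(11|11)=\sqrt5-2$ (where $p^H(ab|xy)$ is listed as $p^H(ab|xy)$ with the pair $xy$ after the bar) belongs to $\mathcal{P}_2^{AB,(1/4,1/4)}$. Consequently, for any $0<l\le h$ and any distribution $p_{XY}$ with $l\le p_{XY}(xy)\le h$ for all $x,y$, the joint behavior $p_{XY}(xy)\,p^H(ab|xy)$ lies in the $(l,h,1/4,1/4)$-MDPDL set.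
   Context: $\mathcal{P}_2^{AB,(\epsilon_A,\epsilon_B)}$ denotes the set of all conditional distributions $p=(p(ab|xy))$ for which there exist a probability space $(\Lambda,q)$ and distributions $p_A(\cdot|x,y,\lambda)$ on $\mathcal{A}$, $p_B(\cdot|x,y,\lambda)$ on $\mathcal{B}$ with $p(ab|xy)=\int q(d\lambda)p_A(a|xy\lambda)p_B(b|xy\lambda)$, $\frac12\sum_a|p_A(a|xy\lambda)-p_A(a|xy'\lambda)|\le\epsilon_A$ for all $x,y,y',\lambda$, and $\frac12\sum_b|p_B(b|xy\lambda)-p_B(b|x'y\lambda)|\le\epsilon_B$ for all $y,x,x',\lambda$. The $(l,h,\epsilon_A,\epsilon_B)$-MDPDL set is the set of joint distributions $p(abxy)=\int q(d\lambda)\,p_{XY|\Lambda}(xy|\lambda)\,p_A(a|xy\lambda)\,p_B(b|xy\lambda)$ with $l\le p_{XY|\Lambda}(xy|\lambda)\le h$ for all $x,y,\lambda$ and $p_A,p_B$ satisfying the same two total-variation constraints. *)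

(* Bell scenario with X = Y = A = B = bool (0 = false, 1 = true). *)
From HB Require Import structures.
From mathcomp Require Import all_boot all_order all_algebra.
From mathcomp Require Import all_classical all_reals all_analysis.
Set Implicit Arguments. Unset Strict Implicit. Unset Printing Implicit Defensive.
Import Order.TTheory GRing.Theory Num.Theory.
Local Open Scope ring_scope.

Definition is_dist (R : realType) (f : bool -> R) : Prop :=
  (forall a, 0 <= f a) /\ f false + f true = 1.

Definition is_dist2 (R : realType) (f : bool -> bool -> R) : Prop :=
  (forall x y, 0 <= f x y) /\ \sum_(x : bool) \sum_(y : bool) f x y = 1.

Definition tv (R : realType) (f g : bool -> R) : R :=
  2^-1 * (`|f false - g false| + `|f true - g true|).

(* Conditional distributions are written p a b x y = p(ab|xy). *)
Definition inP2 (R : realType) (eA eB : R) (p : bool -> bool -> bool -> bool -> R) : Prop :=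
  exists (d : measure_display) (L : measurableType d) (q : probability L R)
         (pA pB : bool -> bool -> L -> bool -> R),
    (forall x y a, measurable_fun setT (fun l => pA x y l a)) /\
    (forall x y b, measurable_fun setT (fun l => pB x y l b)) /\
    (forall x y l, is_dist (pA x y l) /\ is_dist (pB x y l)) /\
    (forall a b x y,
        ((p a b x y)%:E = \int[q]_(l in setT) (pA x y l a * pB x y l b)%:E)%E) /\
    (forall x y y' l, tv (pA x y l) (pA x y' l) <= eA) /\
    (forall x x' y l, tv (pB x y l) (pB x' y l) <= eB).

(* (l,h,eA,eB)-MDPDL set; joint distributions written P a b x y = p(abxy). *)
Definition inMDPDL (R : realType) (lo hi eA eB : R) (P : bool -> bool -> bool -> bool -> R) : Prop :=
  exists (d : measure_display) (L : measurableType d) (q : probability L R)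
         (pXY : L -> bool -> bool -> R)
         (pA pB : bool -> bool -> L -> bool -> R),
    (forall x y, measurable_fun setT (fun l => pXY l x y)) /\
    (forall x y a, measurable_fun setT (fun l => pA x y l a)) /\
    (forall x y b, measurable_fun setT (fun l => pB x y l b)) /\
    (forall l, is_dist2 (pXY l)) /\
    (forall x y l, lo <= pXY l x y <= hi) /\
    (forall x y l, is_dist (pA x y l) /\ is_dist (pB x y l)) /\
    (forall a b x y,
        ((P a b x y)%:E = \int[q]_(l in setT) (pXY l x y * pA x y l a * pB x y l b)%:E)%E) /\
    (forall x y y' l, tv (pA x y l) (pA x y' l) <= eA) /\
    (forall x x' y l, tv (pB x y l) (pB x' y l) <= eB).

Definition pH (R : realType) (a b x y : bool) : R :=
  let s := Num.sqrt (5 : R) in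
  match x, y, a, b with
  | false, false, false, false => (5 * s - 11) / 2
  | false, false, false, true  => (7 - 3 * s) / 2
  | false, false, true,  false => (7 - 3 * s) / 2
  | false, false, true,  true  => (s - 1) / 2
  | false, true,  false, false => s - 2
  | false, true,  false, true  => 0
  | false, true,  true,  false => (7 - 3 * s) / 2
  | false, true,  true,  true  => (s - 1) / 2
  | true,  false, false, false => s - 2
  | true,  false, false, true  => (7 - 3 * s) / 2
  | true,  false, true,  false => 0
  | true,  false, true,  true  => (s - 1) / 2
  | true,  true,  false, false => 0
  | true,  true,  false, true  => (3 - s) / 2
  | true,  true,  true,  false => (3 - s) / 2
  | true,  true,  true,  true  => s - 2
  end.

From HB Require Import structures.
From mathcomp Require Import all_boot all_order all_algebra.
From mathcomp Require Import all_classical all_reals all_analysis.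
From mathcomp Require Import measurable_realfun ring lra.
Set Implicit Arguments. Unset Strict Implicit. Unset Printing Implicit Defensive.
Import Order.TTheory GRing.Theory Num.Theory.
Local Open Scope ring_scope.

(* p^H is a convex combination of seven product strategies with weights in
   Q(sqrt 5); in each of them both parties flip local coins whose bias moves by
   at most 1/4 when the other party's input changes.  The weights define a
   probability on a finite set of hidden variables (a weighted sum of Dirac
   masses), and integrating the product strategies against it gives back p^H.
   For the MDPDL set, the input distribution is taken independent of the hidden
   variable, so it factors out of the integral. *)

Definition bool_dist (R : realType) (u : R) (a : bool) : R := if a then 1 - u else u.

Lemma bool_dist_is_dist (R : realType) (u : R) : 0 <= u <= 1 -> is_dist (bool_dist u).
Proof.
move=> /andP[u_ge0 u_le1]; split; last by rewrite /bool_dist; ring.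
by case; rewrite /bool_dist // subr_ge0.
Qed.

Lemma tv_bool_dist (R : realType) (u v : R) : tv (bool_dist u) (bool_dist v) = `|u - v|.
Proof.
rewrite /tv /bool_dist /= (_ : 1 - u - (1 - v) = - (u - v)); last by ring.
by rewrite normrN; lra.
Qed.

Section finite_mixture.
Variables (R : realType) (n : nat) (w : nat -> R).
Hypothesis w_ge0 : forall k, 0 <= w k.
Hypothesis w_sum1 : \sum_(k < n) w k = 1.

Definition mixture_dirac : set nat -> \bar R :=
  msum (fun k => mscale (NngNum (w_ge0 k)) (@dirac _ nat k R)) n.

HB.instance Definition _ := Measure.on mixture_dirac.

Let mixture_dirac_setT : mixture_dirac setT = 1%E.
Proof.
rewrite /mixture_dirac /= /msum (eq_bigr (fun k : 'I_n => (w k)%:E)).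
  by rewrite sumEFin w_sum1.
by move=> k _; rewrite /= /mscale /= diracT mule1.
Qed.

HB.instance Definition _ :=
  Measure_isProbability.Build _ _ _ mixture_dirac mixture_dirac_setT.

Lemma integral_mixture_dirac (f : nat -> R) : (forall k, 0 <= f k) ->
  (\int[mixture_dirac]_(k in setT) (f k)%:E = (\sum_(k < n) w k * f k)%:E)%E.
Proof.
move=> f_ge0; rewrite ge0_integral_measure_sum //; last by move=> k _; rewrite lee_fin.
rewrite -sumEFin; apply: eq_bigr => k _.
rewrite ge0_integral_mscale //; last by move=> l _; rewrite lee_fin.
by rewrite integral_dirac // diracT mul1e.
Qed.

Lemma inP2_mixture (eA eB : R) (uA uB : nat -> bool -> bool -> R) p :
  (forall k x y, 0 <= uA k x y <= 1) -> (forall k x y, 0 <= uB k x y <= 1) ->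
  (forall k x y y', `|uA k x y - uA k x y'| <= eA) ->
  (forall k x x' y, `|uB k x y - uB k x' y| <= eB) ->
  (forall a b x y, p a b x y =
     \sum_(k < n) w k * (bool_dist (uA k x y) a * bool_dist (uB k x y) b)) ->
  inP2 eA eB p.
Proof.
move=> uA01 uB01 tvA tvB p_mix.
have dist_uA x y k := bool_dist_is_dist (uA01 k x y).
have dist_uB x y k := bool_dist_is_dist (uB01 k x y).
exists _, nat, mixture_dirac, (fun x y k => bool_dist (uA k x y)),
  (fun x y k => bool_dist (uB k x y)).
do 3!split => //; split=> [a b x y|].
  rewrite integral_mixture_dirac ?p_mix // => k.
  by apply: mulr_ge0; [case: (dist_uA x y k) | case: (dist_uB x y k)].
by split=> *; rewrite tv_bool_dist.
Qed.

End finite_mixture.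

Lemma inMDPDL_of_inP2 (R : realType) (lo hi eA eB : R) p (pXY : bool -> bool -> R) :
  inP2 eA eB p -> is_dist2 pXY -> (forall x y, lo <= pXY x y <= hi) ->
  inMDPDL lo hi eA eB (fun a b x y => pXY x y * p a b x y).
Proof.
move=> [d [L [q [pA [pB [mA [mB [pAB_dist [p_int [tvA tvB]]]]]]]]]] pXY_dist pXY_bnd.
exists d, L, q, (fun _ => pXY), pA, pB.
split; first by move=> x y; exact: measurable_cst.
do 5!split => //; split=> [a b x y|//].
rewrite EFinM p_int -ge0_integralZl //.
- by apply: eq_integral => l _; rewrite -EFinM mulrA.
- exact/measurable_EFinP/measurable_funM.
- move=> l _; have [[pA_ge0 _] [pB_ge0 _]] := pAB_dist x y l.
  by rewrite lee_fin mulr_ge0.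
- by rewrite lee_fin; case: pXY_dist.
Qed.

Section pH_local_model.
Variable R : realType.
Local Notation sqrt5 := (Num.sqrt (5 : R)).

Lemma sqrt5_sqr : sqrt5 * sqrt5 = 5.
Proof. by rewrite -expr2 sqr_sqrtr. Qed.

(* Exactly the bounds needed for the weights 68 sqrt5 - 152 and 235 - 105 sqrt5
   to be nonnegative: 38^2 <= 5 * 17^2 and 5 * 21^2 <= 47^2. *)
Lemma sqrt5_bounds : 38 <= 17 * sqrt5 /\ 21 * sqrt5 <= 47.
Proof.
have := sqrt5_sqr; have := sqrtr_ge0 (5 : R) => s_ge0 s_sqr.
by split; nra.
Qed.

Definition pH_weight (k : nat) : R :=
  match k with
  | 0 | 2 => 36 - 16 * sqrt5
  | 1 | 3 => 68 * sqrt5 - 152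
  | 4 | 5 => (235 - 105 * sqrt5) / 2
  | 6 => sqrt5 - 2
  | _ => 0
  end.

Definition pH_respA (k : nat) (x y : bool) : R :=
  match k, x, y with
  | 0, false, false => (sqrt5 + 1) / 4 | 0, false, true => 1
  | 1, false, true => 1 / 4
  | 2, false, false => 1 / 4 | 2, true, _ => 1
  | 3, true, _ => 1 | 4, true, _ => 1
  | _, _, _ => 0
  end.

Definition pH_respB (k : nat) (x y : bool) : R :=
  match k, x, y with
  | 0, false, false => 1 / 4 | 0, _, true => 1
  | 1, _, true => 1
  | 2, false, false => (sqrt5 + 1) / 4 | 2, true, false => 1
  | 3, true, false => 1 / 4
  | 5, _, true => 1
  | _, _, _ => 0
  end.

Lemma pH_weight_ge0 k : 0 <= pH_weight k.
Proof.
have [s_lb s_ub] := sqrt5_bounds.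
by do 7?[case: k => [|k]]; cbn [pH_weight]; lra.
Qed.

Lemma pH_weight_sum1 : \sum_(k < 7) pH_weight k = 1.
Proof. by rewrite !big_ord_recr big_ord0 /=; lra. Qed.

Lemma pH_respA01 k x y : 0 <= pH_respA k x y <= 1.
Proof.
have [s_lb s_ub] := sqrt5_bounds.
by do 7?[case: k => [|k]]; case: x; case: y; cbn [pH_respA];
  apply/andP; split; lra.
Qed.

Lemma pH_respB01 k x y : 0 <= pH_respB k x y <= 1.
Proof.
have [s_lb s_ub] := sqrt5_bounds.
by do 7?[case: k => [|k]]; case: x; case: y; cbn [pH_respB];
  apply/andP; split; lra.
Qed.

Lemma pH_respA_tv k x y y' : `|pH_respA k x y - pH_respA k x y'| <= 4^-1.
Proof.
have [s_lb s_ub] := sqrt5_bounds.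
by do 7?[case: k => [|k]]; case: x; case: y; case: y';
  cbn [pH_respA]; rewrite ler_norml; lra.
Qed.

Lemma pH_respB_tv k x x' y : `|pH_respB k x y - pH_respB k x' y| <= 4^-1.
Proof.
have [s_lb s_ub] := sqrt5_bounds.
by do 7?[case: k => [|k]]; case: x; case: x'; case: y;
  cbn [pH_respB]; rewrite ler_norml; lra.
Qed.

Lemma pH_mixtureE a b x y : pH R a b x y =
  \sum_(k < 7) pH_weight k *
    (bool_dist (pH_respA k x y) a * bool_dist (pH_respB k x y) b).
Proof.
have := sqrt5_sqr => s_sqr.
rewrite !big_ord_recr big_ord0 /=.
by case: a; case: b; case: x; case: y;
  cbn [pH bool_dist pH_weight pH_respA pH_respB]; lra.
Qed.

Lemma inP2_pH : inP2 4^-1 4^-1 (@pH R).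
Proof.
exact: (inP2_mixture pH_weight_ge0 pH_weight_sum1 pH_respA01 pH_respB01
  pH_respA_tv pH_respB_tv pH_mixtureE).
Qed.

End pH_local_model.

Theorem mainTheorem5 (R : realType) :
  inP2 (4^-1 : R) 4^-1 (@pH R) /\
  (forall (lo hi : R) (pXY : bool -> bool -> R),
      0 < lo -> lo <= hi ->
      is_dist2 pXY ->
      (forall x y, lo <= pXY x y <= hi) ->
      inMDPDL lo hi 4^-1 4^-1 (fun a b x y => pXY x y * pH R a b x y)).
Proof.
split; first exact: inP2_pH.
move=> lo hi pXY _ _ pXY_dist pXY_bnd.
exact: inMDPDL_of_inP2 (inP2_pH R) pXY_dist pXY_bnd.
Qed.
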